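(* Let $f:\Sigma\to\mathbb H^3$ be an extrinsically flat surface, $\mathcal W$ its set of umbilic points, and $\gamma$ an asymptotic curve contained in $\Sigma\setminus\mathcal W$, parametrized by arc length $t$ with respect to the induced metric. Then the mean curvature $H$ of $f$ does not vanish on $\gamma$ and satisfies $$\frac{d^2}{dt^2}\Big(\frac1{H(\gamma(t))}\Big)=\frac{1}{H(\gamma(t))}.$$
   Context: A surface in $\mathbb H^3$ is an immersion $f$ of a connected 2-manifold $\Sigma$ into the hyperbolic 3-space of curvature $-1$. With principal curvatures $k_1,k_2$, the extrinsic curvature is $K_{\rm ext}=k_1k_2$ and $H=(k_1+k_2)/2$; $f$ is extrinsically flat if $K_{\rm ext}\equiv0$. A point is umbilic if $k_1=k_2$. An asymptotic curve is a curve whose tangent lies in the kernel of the second fundamental form. *)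

(* classical reals. Local (chart) model of a surface in H^3,
   H^3 realised as the hyperboloid model in Minkowski space R^{3,1}. *)
From Stdlib Require Import Reals.
Open Scope R_scope.

Record v4 := mk4 { x0 : R; x1 : R; x2 : R; x3 : R }.

Definition vadd (p q : v4) : v4 :=
  mk4 (x0 p + x0 q) (x1 p + x1 q) (x2 p + x2 q) (x3 p + x3 q).
Definition vscal (a : R) (p : v4) : v4 :=
  mk4 (a * x0 p) (a * x1 p) (a * x2 p) (a * x3 p).
Definition vzero : v4 := mk4 0 0 0 0.

Definition mdot (p q : v4) : R :=
  - x0 p * x0 q + x1 p * x1 q + x2 p * x2 q + x3 p * x3 q.

Definition in_H3 (p : v4) : Prop := mdot p p = -1 /\ 0 < x0 p.

Definition open2 (U : R -> R -> Prop) : Prop :=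
  forall u v, U u v -> exists e, 0 < e /\
    forall u' v', Rabs (u' - u) < e -> Rabs (v' - v) < e -> U u' v'.

Definition continuous2 (U : R -> R -> Prop) (g : R -> R -> R) : Prop :=
  forall u v, U u v -> forall eps, 0 < eps -> exists d, 0 < d /\
    forall u' v', U u' v' -> Rabs (u' - u) < d -> Rabs (v' - v) < d ->
      Rabs (g u' v' - g u v) < eps.

Definition partial_u (U : R -> R -> Prop) (g gu : R -> R -> R) : Prop :=
  forall u v, U u v -> derivable_pt_lim (fun s => g s v) u (gu u v).
Definition partial_v (U : R -> R -> Prop) (g gv : R -> R -> R) : Prop :=
  forall u v, U u v -> derivable_pt_lim (fun s => g u s) v (gv u v).

Fixpoint Ck2 (k : nat) (U : R -> R -> Prop) (g : R -> R -> R) : Prop :=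
  match k with
  | O => continuous2 U g
  | S k' => continuous2 U g /\ exists gu gv,
      partial_u U g gu /\ partial_v U g gv /\ Ck2 k' U gu /\ Ck2 k' U gv
  end.

Definition smooth2 (U : R -> R -> Prop) (g : R -> R -> R) : Prop :=
  forall k, Ck2 k U g.

Definition vsmooth (U : R -> R -> Prop) (f : R -> R -> v4) : Prop :=
  smooth2 U (fun u v => x0 (f u v)) /\ smooth2 U (fun u v => x1 (f u v)) /\
  smooth2 U (fun u v => x2 (f u v)) /\ smooth2 U (fun u v => x3 (f u v)).

Definition vpartial_u (U : R -> R -> Prop) (f fu : R -> R -> v4) : Prop :=
  partial_u U (fun u v => x0 (f u v)) (fun u v => x0 (fu u v)) /\
  partial_u U (fun u v => x1 (f u v)) (fun u v => x1 (fu u v)) /\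
  partial_u U (fun u v => x2 (f u v)) (fun u v => x2 (fu u v)) /\
  partial_u U (fun u v => x3 (f u v)) (fun u v => x3 (fu u v)).
Definition vpartial_v (U : R -> R -> Prop) (f fv : R -> R -> v4) : Prop :=
  partial_v U (fun u v => x0 (f u v)) (fun u v => x0 (fv u v)) /\
  partial_v U (fun u v => x1 (f u v)) (fun u v => x1 (fv u v)) /\
  partial_v U (fun u v => x2 (f u v)) (fun u v => x2 (fv u v)) /\
  partial_v U (fun u v => x3 (f u v)) (fun u v => x3 (fv u v)).

Fixpoint Ck1 (k : nat) (a b : R) (g : R -> R) : Prop :=
  match k with
  | O => forall t, a < t < b -> continuity_pt g t
  | S k' => (forall t, a < t < b -> continuity_pt g t) /\ exists g',
      (forall t, a < t < b -> derivable_pt_lim g t (g' t)) /\ Ck1 k' a b g'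
  end.
Definition smooth1 (a b : R) (g : R -> R) : Prop := forall k, Ck1 k a b g.

Definition lin_indep (p q : v4) : Prop :=
  forall a c, vadd (vscal a p) (vscal c q) = vzero -> a = 0 /\ c = 0.

Definition unit_normal (x fu fv n : v4) : Prop :=
  mdot n n = 1 /\ mdot n x = 0 /\ mdot n fu = 0 /\ mdot n fv = 0.

Definition EE (fu fv : v4) := mdot fu fu.
Definition FF (fu fv : v4) := mdot fu fv.
Definition GG (fu fv : v4) := mdot fv fv.
(* In the hyperboloid
   model the Levi-Civita connection of H^3 differs from the flat derivative by a
   multiple of the position vector, which is orthogonal to n, so
   II(d_i, d_j) = <d_i d_j f, n>. *)
Definition LL (fuu n : v4) := mdot fuu n.
Definition MM (fuv n : v4) := mdot fuv n.
Definition NN (fvv n : v4) := mdot fvv n.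

Definition Kext (fu fv fuu fuv fvv n : v4) : R :=
  (LL fuu n * NN fvv n - MM fuv n ^ 2) / (EE fu fv * GG fu fv - FF fu fv ^ 2).

Definition Hmean (fu fv fuu fuv fvv n : v4) : R :=
  (EE fu fv * NN fvv n - 2 * FF fu fv * MM fuv n + GG fu fv * LL fuu n)
  / (2 * (EE fu fv * GG fu fv - FF fu fv ^ 2)).

Definition umbilic (fu fv fuu fuv fvv n : v4) : Prop :=
  exists lam, LL fuu n = lam * EE fu fv /\ MM fuv n = lam * FF fu fv /\
              NN fvv n = lam * GG fu fv.

Definition IIq (fuu fuv fvv n : v4) (du dv : R) : R :=
  LL fuu n * du ^ 2 + 2 * MM fuv n * du * dv + NN fvv n * dv ^ 2.
Definition Iq (fu fv : v4) (du dv : R) : R :=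
  EE fu fv * du ^ 2 + 2 * FF fu fv * du * dv + GG fu fv * dv ^ 2.

(* Along an asymptotic curve of an extrinsically flat surface the tangent lies in
   the kernel of the shape operator, so the unit normal n is constant along it.
   Flatness makes n_u and n_v parallel; at a non-umbilic point one of them, say
   n_u, is non-zero, and differentiating the parallelism twice in u gives
   V' = a V and W' = b V + 2 a W for V = n_u o gamma, W = n_uu o gamma.  Since
   |n_u|^2 = 2 H L and <f, n_uu> = L, one has 1/H = 2 <gamma, W> / |V|^2.  The
   frame (gamma, gamma', n, V) is orthogonal, which forces gamma'' = gamma; then
   <gamma, W> / |V|^2 and <gamma', W> / |V|^2 are each the derivative of the
   other.  The case n_v <> 0 follows by exchanging the two coordinates. *)

From Stdlib Require Import Reals Lra Psatz Nsatz ClassicalEpsilon Program.Basics.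
Open Scope R_scope.

(** * Linear algebra in Minkowski space *)

Definition vlin (a : R) (p : v4) (b : R) (q : v4) : v4 := vadd (vscal a p) (vscal b q).

Lemma v4_eq p q : x0 p = x0 q -> x1 p = x1 q -> x2 p = x2 q -> x3 p = x3 q -> p = q.
Proof. destruct p, q; simpl; intros; subst; reflexivity. Qed.

Lemma mdot_sym p q : mdot p q = mdot q p.
Proof. unfold mdot; ring. Qed.

Lemma mdot_vlin_l a p b q r : mdot (vlin a p b q) r = a * mdot p r + b * mdot q r.
Proof. unfold vlin, vadd, vscal, mdot; simpl; ring. Qed.

Lemma mdot_vlin_r a p b q r : mdot r (vlin a p b q) = a * mdot r p + b * mdot r q.
Proof. unfold vlin, vadd, vscal, mdot; simpl; ring. Qed.

Lemma mdot_vscal_l a p q : mdot (vscal a p) q = a * mdot p q.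
Proof. unfold vscal, mdot; simpl; ring. Qed.

Lemma mdot_vscal_r a p q : mdot p (vscal a q) = a * mdot p q.
Proof. unfold vscal, mdot; simpl; ring. Qed.

Lemma mdot_vzero_r p : mdot p vzero = 0.
Proof. unfold mdot, vzero; simpl; ring. Qed.

Lemma vlin_sub_eq0 x y : vlin 1 x (-1) y = vzero -> x = y.
Proof.
  intros Z. apply v4_eq;
    [apply (f_equal x0) in Z|apply (f_equal x1) in Z
    |apply (f_equal x2) in Z|apply (f_equal x3) in Z];
    unfold vlin, vadd, vscal, vzero in Z; simpl in Z; lra.
Qed.

Lemma mdot_nondeg x y : (forall a, mdot x a = mdot y a) -> x = y.
Proof.
  intros H. destruct x as [a0 a1 a2 a3], y as [b0 b1 b2 b3].
  pose proof (H (mk4 1 0 0 0)); pose proof (H (mk4 0 1 0 0));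
  pose proof (H (mk4 0 0 1 0)); pose proof (H (mk4 0 0 0 1)).
  unfold mdot in *; simpl in *. apply v4_eq; simpl; lra.
Qed.

(* Under the orthogonality hypotheses the product is the Gram determinant of
   [p, q, r, s], i.e. [- det (p q r s) ^ 2], and Cramer's rule gives
   [det (p q r s) * y = 0]. *)
Lemma orth_frame_eq0 p q r s y :
  mdot p q = 0 -> mdot p r = 0 -> mdot p s = 0 -> mdot q r = 0 -> mdot q s = 0 ->
  mdot p p * mdot q q * (mdot r r * mdot s s - mdot r s ^ 2) <> 0 ->
  mdot p y = 0 -> mdot q y = 0 -> mdot r y = 0 -> mdot s y = 0 -> y = vzero.
Proof.
  intros Hpq Hpr Hps Hqr Hqs Hg Hp Hq Hr Hs.
  set (g := mdot p p * mdot q q * (mdot r r * mdot s s - mdot r s ^ 2)) in Hg.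
  assert (Hc : g * x0 y = 0 /\ g * x1 y = 0 /\ g * x2 y = 0 /\ g * x3 y = 0).
  { unfold g; revert Hpq Hpr Hps Hqr Hqs Hp Hq Hr Hs.
    destruct p, q, r, s, y; unfold mdot; simpl; intros.
    repeat split; nsatz. }
  assert (Hz : forall z, g * z = 0 -> z = 0).
  { intros z Hz. destruct (Rmult_integral _ _ Hz); [contradiction|assumption]. }
  destruct Hc as (C0 & C1 & C2 & C3).
  apply v4_eq; simpl; apply Hz; assumption.
Qed.

Lemma H3_tangent_spacelike f x : mdot f f = -1 -> 0 < x0 f -> mdot x f = 0 ->
  0 <= mdot x x /\ (mdot x x = 0 -> x = vzero).
Proof.
  destruct f as [f0 f1 f2 f3], x as [y0 y1 y2 y3]; unfold mdot; simpl.
  intros Hf Hpos Ho.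
  (* Lagrange's identity for the spatial parts; [nsatz] must not see [Hpos]. *)
  assert (Hk : f0 * f0 * (- y0 * y0 + y1 * y1 + y2 * y2 + y3 * y3) =
     (y1 * y1 + y2 * y2 + y3 * y3)
     + ((y1 * f2 - y2 * f1) * (y1 * f2 - y2 * f1) + (y1 * f3 - y3 * f1) * (y1 * f3 - y3 * f1)
        + (y2 * f3 - y3 * f2) * (y2 * f3 - y3 * f2))) by (clear Hpos; nsatz).
  assert (Hsq : 0 <= (y1 * f2 - y2 * f1) * (y1 * f2 - y2 * f1)
                     + (y1 * f3 - y3 * f1) * (y1 * f3 - y3 * f1)
                     + (y2 * f3 - y3 * f2) * (y2 * f3 - y3 * f2))
    by (repeat apply Rplus_le_le_0_compat; apply Rle_0_sqr).
  assert (Hf0 : 0 < f0 * f0) by nra.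
  split.
  - apply (Rmult_le_reg_l (f0 * f0)); nra.
  - intro Hz. rewrite Hz, Rmult_0_r in Hk.
    assert (y1 = 0 /\ y2 = 0 /\ y3 = 0) as (-> & -> & ->) by (repeat split; nra).
    assert (y0 = 0) as -> by nra.
    reflexivity.
Qed.

Lemma first_form_det_pos f fu fv :
  mdot f f = -1 -> 0 < x0 f -> mdot fu f = 0 -> mdot fv f = 0 -> lin_indep fu fv ->
  0 < EE fu fv * GG fu fv - FF fu fv ^ 2.
Proof.
  intros Hf Hpos Hu Hv Hli. unfold EE, FF, GG.
  assert (HG : 0 < mdot fv fv).
  { destruct (H3_tangent_spacelike f fv Hf Hpos Hv) as [H0 H1].
    destruct (Rle_lt_or_eq_dec _ _ H0) as [h|h]; [exact h|exfalso].
    destruct (Hli 0 1) as [_ C]; [|lra].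
    rewrite (H1 (eq_sym h)). apply v4_eq; simpl; ring. }
  set (z := vlin (mdot fv fv) fu (- mdot fu fv) fv).
  assert (Hz : mdot z f = 0) by (unfold z; rewrite mdot_vlin_l, Hu, Hv; ring).
  assert (Hzz : mdot z z = mdot fv fv * (mdot fu fu * mdot fv fv - mdot fu fv ^ 2)).
  { unfold z. rewrite mdot_vlin_l, !mdot_vlin_r, (mdot_sym fv fu). ring. }
  destruct (H3_tangent_spacelike f z Hf Hpos Hz) as [H0 H1].
  destruct (Rlt_or_le 0 (mdot fu fu * mdot fv fv - mdot fu fv ^ 2)) as [h|h]; [exact h|exfalso].
  assert (Hz0 : mdot z z = 0) by nra.
  destruct (Hli (mdot fv fv) (- mdot fu fv) (H1 Hz0)). lra.
Qed.

Lemma tangent_decomp f n fu fv y p q :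
  mdot f f = -1 -> 0 < x0 f -> mdot fu f = 0 -> mdot fv f = 0 -> lin_indep fu fv ->
  mdot n n = 1 -> mdot n f = 0 -> mdot n fu = 0 -> mdot n fv = 0 ->
  mdot y f = 0 -> mdot y n = 0 -> mdot y fu = p -> mdot y fv = q ->
  let D := EE fu fv * GG fu fv - FF fu fv ^ 2 in
  y = vlin ((p * GG fu fv - q * FF fu fv) / D) fu ((q * EE fu fv - p * FF fu fv) / D) fv.
Proof.
  intros Hf Hpos Hu Hv Hli Hn Hnf Hnu Hnv Hyf Hyn Hyu Hyv D.
  assert (HD : 0 < D) by (apply (first_form_det_pos f); assumption).
  set (w := vlin 1 y (-1) (vlin ((p * GG fu fv - q * FF fu fv) / D) fu
                              ((q * EE fu fv - p * FF fu fv) / D) fv)).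
  assert (Hw : w = vzero).
  { unfold D, EE, FF, GG in *.
    apply (orth_frame_eq0 f n fu fv); unfold w; rewrite ?mdot_vlin_r;
      rewrite ?(mdot_sym f y), ?(mdot_sym n y), ?(mdot_sym fu y), ?(mdot_sym fv y);
      rewrite ?(mdot_sym f n), ?(mdot_sym f fu), ?(mdot_sym f fv), ?(mdot_sym fv fu) in *;
      rewrite ?Hf, ?Hn, ?Hu, ?Hv, ?Hnf, ?Hnu, ?Hnv, ?Hyf, ?Hyn, ?Hyu, ?Hyv; try ring.
    - nra.
    - field. lra.
    - field. lra. }
  apply vlin_sub_eq0, Hw.
Qed.

Definition wedge (x y a b : v4) : R := mdot x a * mdot y b - mdot x b * mdot y a.

Definition wedge_zero (x y : v4) : Prop := forall a b, wedge x y a b = 0.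

Lemma wedge_zero_vscal x y : wedge_zero x y -> mdot x x <> 0 ->
  y = vscal (mdot y x / mdot x x) x.
Proof.
  intros W Hx. apply mdot_nondeg. intros a. specialize (W x a). unfold wedge in W.
  rewrite mdot_vscal_l. apply (Rmult_eq_reg_l (mdot x x)); [|exact Hx].
  field_simplify; [lra|exact Hx].
Qed.

Lemma wedge_zero_diff1 x y xu yu : wedge_zero x y -> mdot x x <> 0 ->
  (forall a b, wedge xu y a b + wedge x yu a b = 0) ->
  exists lam, yu = vlin (mdot y x / mdot x x) xu lam x.
Proof.
  intros W Hx W1. set (mu := mdot y x / mdot x x).
  assert (Hy : y = vscal mu x) by (apply wedge_zero_vscal; assumption).
  set (z := vlin 1 yu (- mu) xu).
  assert (Wz : wedge_zero x z).
  { intros a b. rewrite <- (W1 a b), Hy. unfold z, wedge.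
    rewrite !mdot_vlin_l, !mdot_vscal_l. ring. }
  exists (mdot z x / mdot x x).
  apply mdot_nondeg. intros a.
  assert (E := f_equal (fun w => mdot w a) (wedge_zero_vscal x z Wz Hx)).
  revert E; unfold z; cbv beta.
  rewrite !mdot_vlin_l, !mdot_vscal_l. intro E. lra.
Qed.

Lemma wedge_zero_diff2 x y xu yu xuu yuu lam : wedge_zero x y -> mdot x x <> 0 ->
  yu = vlin (mdot y x / mdot x x) xu lam x ->
  (forall a b, wedge xuu y a b + 2 * wedge xu yu a b + wedge x yuu a b = 0) ->
  exists kap, yuu = vadd (vlin (mdot y x / mdot x x) xuu (2 * lam) xu) (vscal kap x).
Proof.
  intros W Hx Hyu W2. set (mu := mdot y x / mdot x x) in *.
  assert (Hy : y = vscal mu x) by (apply wedge_zero_vscal; assumption).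
  set (z := vadd (vlin 1 yuu (- mu) xuu) (vscal (- 2 * lam) xu)).
  assert (Wz : wedge_zero x z).
  { intros a b. rewrite <- (W2 a b), Hyu, Hy. unfold z, wedge.
    unfold mdot, vscal, vlin, vadd; simpl; ring. }
  exists (mdot z x / mdot x x).
  apply mdot_nondeg. intros a.
  assert (E := f_equal (fun w => mdot w a) (wedge_zero_vscal x z Wz Hx)).
  revert E; unfold z; cbv beta.
  unfold mdot, vscal, vlin, vadd; simpl. intro E. lra.
Qed.

(** * The shape operator of a flat surface at a point *)

Definition surface_frame (f fu fv n : v4) : Prop :=
  mdot f f = -1 /\ 0 < x0 f /\ mdot fu f = 0 /\ mdot fv f = 0 /\ lin_indep fu fv /\
  mdot n n = 1 /\ mdot n f = 0 /\ mdot n fu = 0 /\ mdot n fv = 0.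

Definition weingarten_data (f fu fv n nu nv : v4) (L M N : R) : Prop :=
  mdot nu f = 0 /\ mdot nu n = 0 /\ mdot nu fu = - L /\ mdot nu fv = - M /\
  mdot nv f = 0 /\ mdot nv n = 0 /\ mdot nv fu = - M /\ mdot nv fv = - N.

Lemma mdot_tangent_Iq fu fv du dv :
  mdot (vlin du fu dv fv) (vlin du fu dv fv) = Iq fu fv du dv.
Proof.
  rewrite mdot_vlin_l, !mdot_vlin_r. unfold Iq, EE, FF, GG. rewrite (mdot_sym fv fu). ring.
Qed.

Section Weingarten.

Variables f fu fv n nu nv : v4.
Variables L M N : R.
Hypothesis Hfr : surface_frame f fu fv n.
Hypothesis Hw : weingarten_data f fu fv n nu nv L M N.

Let E := EE fu fv.
Let F := FF fu fv.
Let G := GG fu fv.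
Let D := E * G - F ^ 2.

Lemma frame_det_pos : 0 < D.
Proof. destruct Hfr as (? & ? & ? & ? & ? & _). apply (first_form_det_pos f); assumption. Qed.

Lemma weingarten_u : nu = vlin ((- L * G + M * F) / D) fu ((- M * E + L * F) / D) fv.
Proof.
  destruct Hfr as (? & ? & ? & ? & ? & ? & ? & ? & ?), Hw as (? & ? & ? & ? & _).
  rewrite (tangent_decomp f n fu fv nu (- L) (- M)) by assumption.
  f_equal; unfold D, E, F, G; field; apply Rgt_not_eq, frame_det_pos.
Qed.

Lemma weingarten_v : nv = vlin ((- M * G + N * F) / D) fu ((- N * E + M * F) / D) fv.
Proof.
  destruct Hfr as (? & ? & ? & ? & ? & ? & ? & ? & ?), Hw as (_ & _ & _ & _ & ? & ? & ? & ?).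
  rewrite (tangent_decomp f n fu fv nv (- M) (- N)) by assumption.
  f_equal; unfold D, E, F, G; field; apply Rgt_not_eq, frame_det_pos.
Qed.

Hypothesis Hflat : L * N = M ^ 2.

(* The Gauss map has rank at most one: [det (dn) = (L N - M^2) / D]. *)
Lemma flat_normal_wedge : wedge_zero nu nv.
Proof.
  intros a b. pose proof frame_det_pos.
  unfold wedge. rewrite weingarten_u, weingarten_v, !mdot_vlin_l.
  transitivity ((L * N - M ^ 2) / D * (mdot fu a * mdot fv b - mdot fu b * mdot fv a)).
  - unfold D in *. field. lra.
  - rewrite Hflat. unfold Rdiv. ring.
Qed.

Lemma flat_mdot_nu : mdot nu nu = 2 * ((E * N - 2 * F * M + G * L) / (2 * D)) * L.
Proof.
  pose proof frame_det_pos. destruct Hw as (_ & _ & Hu & Hv & _).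
  rewrite weingarten_u at 2. rewrite mdot_vlin_r, Hu, Hv.
  transitivity ((G * L ^ 2 - 2 * F * L * M + E * M ^ 2) / D).
  - field. lra.
  - rewrite <- Hflat. field. lra.
Qed.

Lemma flat_nu_pos : L <> 0 <-> 0 < mdot nu nu.
Proof.
  destruct Hfr as (Hf & Hpos & _), Hw as (Hnf & _ & Hnu & _).
  destruct (H3_tangent_spacelike f nu Hf Hpos Hnf) as [H0 H1].
  split.
  - intro HL. destruct (Rle_lt_or_eq_dec _ _ H0) as [h|h]; [exact h|exfalso].
    rewrite (H1 (eq_sym h)), mdot_sym, mdot_vzero_r in Hnu. lra.
  - intros Hnn HL. assert (HM : M = 0) by (rewrite HL in Hflat; nra).
    assert (Hz : nu = vzero).
    { rewrite weingarten_u, HL, HM. apply v4_eq; unfold vlin, vadd, vscal; simpl;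
        field; apply Rgt_not_eq, frame_det_pos. }
    rewrite Hz, mdot_vzero_r in Hnn. lra.
Qed.

Variables du dv : R.
Hypothesis Hasy : L * du ^ 2 + 2 * M * du * dv + N * dv ^ 2 = 0.

(* With [L N = M^2] the second fundamental form is a perfect square, so its
   null directions form the kernel of the shape operator. *)
Lemma asymptotic_ker : L * du + M * dv = 0 /\ M * du + N * dv = 0.
Proof.
  destruct (Req_dec L 0) as [HL|HL].
  - assert (HM : M = 0) by (rewrite HL in Hflat; nra).
    subst L M. split; [ring|].
    destruct (Req_dec N 0) as [HN|HN]; [rewrite HN; ring|].
    assert (Hd : N * (dv * dv) = 0) by lra.
    destruct (Rmult_integral _ _ Hd) as [HN0|Hd0]; [contradiction|].
    destruct (Rmult_integral _ _ Hd0) as [Z|Z]; rewrite Z; ring.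
  - assert (Hs : L * (L * du ^ 2 + 2 * M * du * dv + N * dv ^ 2) = (L * du + M * dv) ^ 2)
      by (transitivity ((L * du + M * dv) ^ 2 + (L * N - M ^ 2) * dv ^ 2);
          [ring|rewrite Hflat; ring]).
    rewrite Hasy in Hs. assert (H1 : L * du + M * dv = 0) by nra.
    split; [exact H1|].
    apply (Rmult_eq_reg_l L); [|exact HL].
    replace (L * (M * du + N * dv)) with (M * (L * du) + (L * N) * dv) by ring.
    rewrite Hflat. replace (L * du) with (- (M * dv)) by lra. ring.
Qed.

Lemma asymptotic_dn : vlin du nu dv nv = vzero.
Proof.
  destruct asymptotic_ker as [K1 K2]. pose proof frame_det_pos.
  rewrite weingarten_u, weingarten_v.
  transitivity (vlin ((- G * (L * du + M * dv) + F * (M * du + N * dv)) / D) fu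
                     ((- E * (M * du + N * dv) + F * (L * du + M * dv)) / D) fv).
  - apply v4_eq; unfold vlin, vadd, vscal; simpl; field; lra.
  - rewrite K1, K2. apply v4_eq; unfold vlin, vadd, vscal; simpl; field; lra.
Qed.

Lemma asymptotic_tangent_nu : mdot (vlin du fu dv fv) nu = 0.
Proof.
  destruct asymptotic_ker as [K1 _], Hw as (_ & _ & Hu & Hv & _).
  rewrite mdot_vlin_l, (mdot_sym fu), (mdot_sym fv), Hu, Hv. lra.
Qed.

End Weingarten.

(** * Calculus in one variable *)

Lemma derivable_pt_lim_congr f g x l l' :
  (forall s, f s = g s) -> l = l' -> derivable_pt_lim f x l -> derivable_pt_lim g x l'.
Proof. intros Hfg <-. apply derivable_pt_lim_ext, Hfg. Qed.

Lemma derivable_pt_lim_near f x l : derivable_pt_lim f x l ->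
  forall eps, 0 < eps -> exists d, 0 < d /\
    forall y, Rabs (y - x) < d -> Rabs (f y - f x) < eps.
Proof.
  intros H eps Heps.
  destruct (derivable_continuous_pt f x (exist _ l H) eps Heps) as [d [Hd Hc]].
  exists d; split; [exact Hd|]. intros y Hy.
  destruct (Req_dec y x) as [->|Hne]; [rewrite Rminus_diag, Rabs_R0; exact Heps|].
  apply Hc. split; [split; [exact I|auto]|exact Hy].
Qed.

Lemma derivable_pt_lim_open_ext D f g t l : open_set D -> D t ->
  (forall s, D s -> f s = g s) -> derivable_pt_lim f t l -> derivable_pt_lim g t l.
Proof.
  intros HD Ht Hfg. destruct (HD t Ht) as [d Hd].
  apply (derivable_pt_lim_locally_ext f g t (t - d) (t + d)).
  - pose proof (cond_pos d). lra.
  - intros s Hs. apply Hfg, Hd. unfold disc. apply Rabs_def1; lra.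
Qed.

Lemma derivable_pt_lim_open_const D f c t : open_set D -> D t ->
  (forall s, D s -> f s = c) -> derivable_pt_lim f t 0.
Proof.
  intros HD Ht Hf. apply (derivable_pt_lim_open_ext D (fun _ => c)); [assumption|assumption| |].
  - intros s Hs. symmetry. apply Hf, Hs.
  - apply derivable_pt_lim_const.
Qed.

Lemma open_set_pos D g g' : open_set D -> (forall t, D t -> derivable_pt_lim g t (g' t)) ->
  open_set (fun t => D t /\ 0 < g t).
Proof.
  intros HD Hg t [Ht Hpos]. destruct (HD t Ht) as [d1 Hd1].
  destruct (derivable_pt_lim_near g t (g' t) (Hg t Ht) (g t) Hpos) as [d2 [Hd2 Hc]].
  assert (Hd : 0 < Rmin d1 d2) by (apply Rmin_pos; [apply cond_pos|exact Hd2]).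
  exists (mkposreal _ Hd). intros s Hs. unfold disc in Hs; simpl in Hs.
  pose proof (Rmin_l d1 d2); pose proof (Rmin_r d1 d2). split.
  - apply Hd1. unfold disc. lra.
  - assert (Hs2 : Rabs (s - t) < d2) by lra. specialize (Hc s Hs2).
    apply Rabs_def2 in Hc. lra.
Qed.

Lemma MVT_quotient (phi dphi : R -> R) (x y : R) : x <> y ->
  (forall s, Rmin x y <= s <= Rmax x y -> derivable_pt_lim phi s (dphi s)) ->
  exists c, Rmin x y < c < Rmax x y /\ (phi y - phi x) / (y - x) = dphi c.
Proof.
  intros Hxy Hd. destruct (Rlt_or_le x y) as [h|h].
  - rewrite Rmin_left, Rmax_right in * by lra.
    destruct (MVT_cor2 phi dphi x y h Hd) as [c [E I]]. exists c; split; [exact I|].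
    rewrite E. field. lra.
  - assert (y < x) by (destruct h; [assumption|congruence]).
    rewrite Rmin_right, Rmax_left in * by lra.
    destruct (MVT_cor2 phi dphi y x H Hd) as [c [E I]]. exists c; split; [exact I|].
    replace ((phi y - phi x) / (y - x)) with ((phi x - phi y) / (x - y)) by (field; lra).
    rewrite E. field. lra.
Qed.

Definition vderiv (X : R -> v4) (t : R) (DX : v4) : Prop :=
  derivable_pt_lim (fun s => x0 (X s)) t (x0 DX) /\
  derivable_pt_lim (fun s => x1 (X s)) t (x1 DX) /\
  derivable_pt_lim (fun s => x2 (X s)) t (x2 DX) /\
  derivable_pt_lim (fun s => x3 (X s)) t (x3 DX).

Lemma vderiv_mdot X Y t DX DY : vderiv X t DX -> vderiv Y t DY ->
  derivable_pt_lim (fun s => mdot (X s) (Y s)) t (mdot DX (Y t) + mdot (X t) DY).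
Proof.
  intros (A0 & A1 & A2 & A3) (B0 & B1 & B2 & B3).
  pose proof (derivable_pt_lim_plus _ _ _ _ _ (derivable_pt_lim_plus _ _ _ _ _
    (derivable_pt_lim_plus _ _ _ _ _
      (derivable_pt_lim_opp _ _ _ (derivable_pt_lim_mult _ _ _ _ _ A0 B0))
      (derivable_pt_lim_mult _ _ _ _ _ A1 B1))
      (derivable_pt_lim_mult _ _ _ _ _ A2 B2))
      (derivable_pt_lim_mult _ _ _ _ _ A3 B3)) as S.
  refine (derivable_pt_lim_congr _ _ _ _ _ _ _ S);
    [intro s; unfold mdot, plus_fct, mult_fct, opp_fct; ring|unfold mdot; ring].
Qed.

Lemma derivable_pt_lim_lincomb a b x y t da db dx dy :
  derivable_pt_lim a t da -> derivable_pt_lim b t db ->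
  derivable_pt_lim x t dx -> derivable_pt_lim y t dy ->
  derivable_pt_lim (fun s => a s * x s + b s * y s) t (da * x t + a t * dx + (db * y t + b t * dy)).
Proof.
  intros Ha Hb Hx Hy.
  apply (derivable_pt_lim_plus (fun s => a s * x s) (fun s => b s * y s));
    apply derivable_pt_lim_mult; assumption.
Qed.

Lemma vderiv_vlin a b X Y t da db DX DY :
  derivable_pt_lim a t da -> derivable_pt_lim b t db -> vderiv X t DX -> vderiv Y t DY ->
  vderiv (fun s => vlin (a s) (X s) (b s) (Y s)) t
    (vadd (vlin da (X t) (a t) DX) (vlin db (Y t) (b t) DY)).
Proof.
  intros Ha Hb (A0 & A1 & A2 & A3) (B0 & B1 & B2 & B3). unfold vlin, vadd, vscal; simpl.
  repeat split; apply derivable_pt_lim_lincomb; assumption.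
Qed.

Lemma vderiv_const c t : vderiv (fun _ => c) t vzero.
Proof. repeat split; apply derivable_pt_lim_const. Qed.

Lemma open_set_interval a b : open_set (fun t => a < t < b).
Proof.
  intros t Ht. assert (Hd : 0 < Rmin (t - a) (b - t)) by (apply Rmin_pos; lra).
  exists (mkposreal _ Hd). intros s Hs. unfold disc in Hs; simpl in Hs.
  pose proof (Rmin_l (t - a) (b - t)); pose proof (Rmin_r (t - a) (b - t)).
  apply Rabs_def2 in Hs. lra.
Qed.

Definition second_deriv_self_near (h : R -> R) (t0 : R) : Prop :=
  exists D (g : R -> R), open_set D /\ D t0 /\
    forall t, D t -> derivable_pt_lim h t (g t) /\ derivable_pt_lim g t (h t).

Lemma second_deriv_self_glue (h : R -> R) a b :
  (forall t, a < t < b -> second_deriv_self_near h t) ->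
  exists h', forall t, a < t < b ->
    derivable_pt_lim h t (h' t) /\ derivable_pt_lim h' t (h t).
Proof.
  intros Hloc.
  set (h' := fun t => epsilon (inhabits 0) (fun l => derivable_pt_lim h t l)).
  assert (Hh' : forall t l, derivable_pt_lim h t l -> derivable_pt_lim h t (h' t)).
  { intros t l Hl. exact (epsilon_spec (inhabits 0) (fun l => derivable_pt_lim h t l)
      (ex_intro _ l Hl)). }
  exists h'. intros t Ht. destruct (Hloc t Ht) as (D & g & HD & Dt & Hg).
  split; [exact (Hh' t (g t) (proj1 (Hg t Dt)))|].
  apply (derivable_pt_lim_open_ext D g h' t (h t) HD Dt); [|exact (proj2 (Hg t Dt))].
  intros s Ds. exact (uniqueness_limite _ _ _ _ (proj1 (Hg s Ds)) (Hh' s _ (proj1 (Hg s Ds)))).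
Qed.

Lemma smooth1_second_deriv a b c c' : smooth1 a b c ->
  (forall t, a < t < b -> derivable_pt_lim c t (c' t)) ->
  forall t, a < t < b -> exists l, derivable_pt_lim c' t l.
Proof.
  intros Hs Hd t Ht. destruct (Hs 2%nat) as [_ [g' [Hg' [_ [g'' [Hg'' _]]]]]].
  exists (g'' t). apply (derivable_pt_lim_open_ext _ g' c' t _ (open_set_interval a b) Ht).
  - intros s Hs'. exact (uniqueness_limite _ _ _ _ (Hg' s Hs') (Hd s Hs')).
  - exact (Hg'' t Ht).
Qed.

(** * Partial derivatives *)

Lemma Rabs_between x y c : Rmin x y <= c <= Rmax x y -> Rabs (c - x) <= Rabs (y - x).
Proof. unfold Rmin, Rmax. destruct (Rle_dec x y); intros; split_Rabs; lra. Qed.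

Section Partials.

Variable U : R -> R -> Prop.
Hypothesis HU : open2 U.

Lemma open2_flip : open2 (flip U).
Proof.
  intros u v Huv. destruct (HU v u Huv) as [e [He Hb]].
  exists e; split; [exact He|]. intros u' v' H1 H2. apply Hb; assumption.
Qed.

Lemma continuous2_ext g g' : (forall u v, U u v -> g u v = g' u v) ->
  continuous2 U g -> continuous2 U g'.
Proof.
  intros Hg H u v Huv eps Heps. destruct (H u v Huv eps Heps) as [d [Hd Hb]].
  exists d; split; [exact Hd|]. intros u' v' H' H1 H2. rewrite <- !Hg by assumption. auto.
Qed.

Lemma partial_u_ext g g' gu gu' : (forall u v, U u v -> g u v = g' u v) ->
  (forall u v, U u v -> gu u v = gu' u v) -> partial_u U g gu -> partial_u U g' gu'.
Proof.
  intros Hg Hgu H u v Huv. rewrite <- Hgu by assumption.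
  destruct (HU u v Huv) as [e [He Hb]].
  apply (derivable_pt_lim_locally_ext (fun s => g s v) _ u (u - e) (u + e)); [lra| |auto].
  intros s Hs. apply Hg, Hb; apply Rabs_def1; lra.
Qed.

Lemma partial_u_unique g g1 g2 u v :
  partial_u U g g1 -> partial_u U g g2 -> U u v -> g1 u v = g2 u v.
Proof. intros H1 H2 H. exact (uniqueness_limite _ _ _ _ (H1 u v H) (H2 u v H)). Qed.

Lemma partial_u_const g gu c : (forall u v, U u v -> g u v = c) ->
  partial_u U g gu -> forall u v, U u v -> gu u v = 0.
Proof.
  intros Hg H u v Huv.
  apply (partial_u_unique (fun _ _ => c) gu (fun _ _ => 0) u v);
    [|intros ? ? _; apply derivable_pt_lim_const|exact Huv].
  apply (partial_u_ext g _ gu gu); auto.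
Qed.

End Partials.

Lemma partial_v_flip U g gv : partial_v U g gv <-> partial_u (flip U) (flip g) (flip gv).
Proof. split; intros H u v; exact (H v u). Qed.

Lemma partial_u_flip U g gu : partial_u U g gu <-> partial_v (flip U) (flip g) (flip gu).
Proof. split; intros H u v; exact (H v u). Qed.

Lemma partial_v_ext U g g' gv gv' : open2 U -> (forall u v, U u v -> g u v = g' u v) ->
  (forall u v, U u v -> gv u v = gv' u v) -> partial_v U g gv -> partial_v U g' gv'.
Proof.
  intros HU Hg Hgv H.
  apply partial_v_flip.
  exact (partial_u_ext (flip U) (open2_flip U HU) (flip g) (flip g') (flip gv) (flip gv')
    (fun u v => Hg v u) (fun u v => Hgv v u) (proj1 (partial_v_flip _ _ _) H)).
Qed.

Lemma Ck2_ext k : forall U g g', open2 U -> (forall u v, U u v -> g u v = g' u v) ->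
  Ck2 k U g -> Ck2 k U g'.
Proof.
  induction k as [|k IH]; simpl; intros U g g' HU Hg H.
  - exact (continuous2_ext U g g' Hg H).
  - destruct H as [Hc [gu [gv [Hu [Hv Hk]]]]].
    split; [exact (continuous2_ext U g g' Hg Hc)|].
    exists gu, gv. split; [|split; [|exact Hk]].
    + exact (partial_u_ext U HU g g' gu gu Hg (fun _ _ _ => eq_refl) Hu).
    + exact (partial_v_ext U g g' gv gv HU Hg (fun _ _ _ => eq_refl) Hv).
Qed.

Lemma Ck2_flip k : forall U g, Ck2 k U g -> Ck2 k (flip U) (flip g).
Proof.
  assert (Hc : forall U g, continuous2 U g -> continuous2 (flip U) (flip g)).
  { intros U g H u v Huv eps Heps. destruct (H v u Huv eps Heps) as [d [Hd Hb]].
    exists d; split; [exact Hd|]. intros u' v' H' H1 H2. apply Hb; assumption. }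
  induction k as [|k IH]; simpl; intros U g H; [exact (Hc U g H)|].
  destruct H as [H0 [gu [gv [Hu [Hv [Hku Hkv]]]]]].
  split; [exact (Hc U g H0)|]. exists (flip gv), (flip gu).
  repeat split; [apply partial_v_flip, Hv|apply partial_u_flip, Hu|apply IH, Hkv|apply IH, Hku].
Qed.

Lemma smooth2_flip U g : smooth2 U g -> smooth2 (flip U) (flip g).
Proof. intros H k. apply Ck2_flip, H. Qed.

Lemma smooth2_partial_u U g gu : open2 U -> smooth2 U g -> partial_u U g gu -> smooth2 U gu.
Proof.
  intros HU Hs Hu k. destruct (Hs (S k)) as [_ [gu' [gv' [Hu' [_ [Hk _]]]]]].
  apply (Ck2_ext k U gu'); [exact HU| |exact Hk].
  intros u v H. exact (partial_u_unique U g gu' gu u v Hu' Hu H).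
Qed.

Lemma smooth2_partial_v U g gv : open2 U -> smooth2 U g -> partial_v U g gv -> smooth2 U gv.
Proof.
  intros HU Hs Hv. exact (smooth2_flip _ _ (smooth2_partial_u (flip U) (flip g) (flip gv)
    (open2_flip U HU) (smooth2_flip U g Hs) (proj1 (partial_v_flip _ _ _) Hv))).
Qed.

Lemma smooth2_ex_partial_u U g : smooth2 U g -> exists gu, partial_u U g gu.
Proof. intros Hs. destruct (Hs 1%nat) as [_ [gu [_ [H _]]]]. exists gu; exact H. Qed.

Lemma smooth2_ex_partial_v U g : smooth2 U g -> exists gv, partial_v U g gv.
Proof. intros Hs. destruct (Hs 1%nat) as [_ [_ [gv [_ [H _]]]]]. exists gv; exact H. Qed.

Definition quot_u (g gu : R -> R -> R) (u0 u v : R) : R :=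
  if Req_dec_T u u0 then gu u0 v else (g u v - g u0 v) / (u - u0).

Lemma quot_u_near U g gu u0 v0 : open2 U -> partial_u U g gu -> continuous2 U gu ->
  U u0 v0 -> forall eps, 0 < eps -> exists d, 0 < d /\ forall u v,
    Rabs (u - u0) < d -> Rabs (v - v0) < d -> Rabs (quot_u g gu u0 u v - gu u0 v0) < eps.
Proof.
  intros HU Hu Hc H0 eps Heps.
  destruct (HU u0 v0 H0) as [e [He Hb]], (Hc u0 v0 H0 eps Heps) as [d1 [Hd1 Hd]].
  exists (Rmin e d1); split; [apply Rmin_pos; assumption|]. intros u v Hu' Hv'.
  pose proof (Rmin_l e d1); pose proof (Rmin_r e d1).
  assert (Hball : forall s, Rabs (s - u0) < Rmin e d1 ->
    U s v /\ Rabs (gu s v - gu u0 v0) < eps).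
  { intros s Hs. assert (U s v) by (apply Hb; lra).
    split; [assumption|]. apply Hd; [assumption|lra|lra]. }
  unfold quot_u. destruct (Req_dec_T u u0) as [->|Hne].
  - apply Hball. rewrite Rminus_diag, Rabs_R0. apply Rmin_pos; assumption.
  - destruct (MVT_quotient (fun s => g s v) (fun s => gu s v) u0 u) as [c [Ic ->]];
      [congruence| |].
    + intros s Hs. apply Hu, Hball. pose proof (Rabs_between u0 u s Hs). lra.
    + apply Hball. assert (Hc' : Rmin u0 u <= c <= Rmax u0 u) by lra.
      pose proof (Rabs_between u0 u c Hc'). lra.
Qed.

Lemma partial_chain U g gu gv cu cv t0 du dv : open2 U ->
  partial_u U g gu -> partial_v U g gv -> continuous2 U gu -> U (cu t0) (cv t0) ->
  derivable_pt_lim cu t0 du -> derivable_pt_lim cv t0 dv ->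
  derivable_pt_lim (fun t => g (cu t) (cv t)) t0
    (gu (cu t0) (cv t0) * du + gv (cu t0) (cv t0) * dv).
Proof.
  intros HU Hu Hv Hc H0 Du Dv.
  set (u0 := cu t0) in *; set (v0 := cv t0) in *.
  apply uniqueness_step3.
  (* [g (cu t) (cv t) - g u0 v0 = quot_u ... * (cu t - u0) + (g u0 (cv t) - g u0 v0)] *)
  apply (limit1_ext (fun h => quot_u g gu u0 (cu (t0 + h)) (cv (t0 + h))
                        * ((cu (t0 + h) - cu t0) / h)
                      + (g u0 (cv (t0 + h)) - g u0 (cv t0)) / h)).
  { intros h Hh. unfold quot_u. fold u0 v0.
    destruct (Req_dec_T (cu (t0 + h)) u0) as [->|Hne].
    - unfold Rminus at 1. rewrite Rplus_opp_r. field; assumption.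
    - field. split; [assumption|]. intro Z. apply Hne. lra. }
  apply limit_plus; [apply limit_mul|].
  - intros eps Heps.
    destruct (quot_u_near U g gu u0 v0 HU Hu Hc H0 eps Heps) as [d [Hd Hq]].
    destruct (derivable_pt_lim_near cu t0 du Du d Hd) as [a1 [Ha1 Ca]].
    destruct (derivable_pt_lim_near cv t0 dv Dv d Hd) as [a2 [Ha2 Cb]].
    exists (Rmin a1 a2); split; [apply Rmin_pos; assumption|].
    intros h [_ Hlt]. simpl in *. unfold R_dist in *. rewrite Rminus_0_r in Hlt.
    pose proof (Rmin_l a1 a2); pose proof (Rmin_r a1 a2).
    apply Hq; [apply Ca|apply Cb]; replace (t0 + h - t0) with h by ring; lra.
  - exact (uniqueness_step2 cu t0 du Du).
  - apply (uniqueness_step2 (fun t => g u0 (cv t))).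
    exact (derivable_pt_lim_comp cv (fun s => g u0 s) t0 dv (gv u0 v0) Dv (Hv u0 v0 H0)).
Qed.

(* Both mixed partials equal [Δ / h^2], where [Δ] is the double difference of
   [g] on the square [u, u + h] x [v, v + h]. *)
Lemma mixed_partials_square U g gu gv guv gvu u v h :
  partial_u U g gu -> partial_v U g gv -> partial_v U gu guv -> partial_u U gv gvu ->
  0 < h -> (forall s s', u <= s <= u + h -> v <= s' <= v + h -> U s s') ->
  exists a b a' b', u < a < u + h /\ v < b < v + h /\ u < a' < u + h /\ v < b' < v + h /\
    guv a b = gvu a' b'.
Proof.
  intros Hu Hv Huv Hvu Hh Bx.
  destruct (MVT_cor2 (fun s => g s (v + h) - g s v) (fun s => gu s (v + h) - gu s v) u (u + h))
    as [a [Ea Ia]]; [lra| |].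
  { intros c Hc. apply derivable_pt_lim_minus; apply Hu, Bx; lra. }
  destruct (MVT_cor2 (fun s => gu a s) (fun s => guv a s) v (v + h)) as [b [Eb Ib]]; [lra| |].
  { intros c Hc. apply Huv, Bx; lra. }
  destruct (MVT_cor2 (fun s => g (u + h) s - g u s) (fun s => gv (u + h) s - gv u s) v (v + h))
    as [b' [Eb' Ib']]; [lra| |].
  { intros c Hc. apply derivable_pt_lim_minus; apply Hv, Bx; lra. }
  destruct (MVT_cor2 (fun s => gv s b') (fun s => gvu s b') u (u + h)) as [a' [Ea' Ia']];
    [lra| |].
  { intros c Hc. apply Hvu, Bx; lra. }
  exists a, b, a', b'. do 4 (split; [lra|]).
  apply (Rmult_eq_reg_r (h * h)); [|nra].
  replace (u + h - u) with h in * by ring. replace (v + h - v) with h in * by ring.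
  transitivity ((gu a (v + h) - gu a v) * h); [rewrite Eb; ring|].
  transitivity ((gv (u + h) b' - gv u b') * h); [|rewrite Ea'; ring].
  rewrite <- Ea, <- Eb'. ring.
Qed.

Lemma partial_schwarz U g gu gv guv gvu u v : open2 U ->
  partial_u U g gu -> partial_v U g gv -> partial_v U gu guv -> partial_u U gv gvu ->
  continuous2 U guv -> continuous2 U gvu -> U u v -> guv u v = gvu u v.
Proof.
  intros HU Hu Hv Huv Hvu C1 C2 H.
  destruct (Req_dec (guv u v - gvu u v) 0) as [Z|Z]; [lra|exfalso].
  set (eps := Rabs (guv u v - gvu u v) / 4).
  assert (Heps : 0 < eps) by (unfold eps; apply Rabs_pos_lt in Z; lra).
  destruct (HU u v H) as [e [He Hb]].
  destruct (C1 u v H eps Heps) as [d1 [Hd1 B1]], (C2 u v H eps Heps) as [d2 [Hd2 B2]].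
  set (h := Rmin e (Rmin d1 d2) / 2).
  assert (Hm : 0 < Rmin e (Rmin d1 d2)) by (repeat apply Rmin_pos; assumption).
  pose proof (Rmin_l e (Rmin d1 d2)); pose proof (Rmin_r e (Rmin d1 d2));
    pose proof (Rmin_l d1 d2); pose proof (Rmin_r d1 d2).
  destruct (mixed_partials_square U g gu gv guv gvu u v h Hu Hv Huv Hvu)
    as (a & b & a' & b' & Ia & Ib & Ia' & Ib' & Eq); [unfold h; lra| |].
  { intros s s' Hs Hs'. apply Hb; apply Rabs_def1; unfold h in *; lra. }
  assert (R1 : Rabs (guv a b - guv u v) < eps)
    by (apply B1; [apply Hb| |]; apply Rabs_def1; unfold h in *; lra).
  assert (R2 : Rabs (gvu a' b' - gvu u v) < eps)
    by (apply B2; [apply Hb| |]; apply Rabs_def1; unfold h in *; lra).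
  rewrite Eq in R1. apply Rabs_def2 in R1. apply Rabs_def2 in R2.
  assert (Hx : Rabs (guv u v - gvu u v) < 2 * eps) by (apply Rabs_def1; lra).
  unfold eps in Hx. pose proof (Rabs_pos (guv u v - gvu u v)). lra.
Qed.

Lemma partial_clairaut U g gu gv guv gvu : open2 U ->
  partial_u U g gu -> partial_v U g gv -> partial_v U gu guv -> partial_u U gv gvu ->
  continuous2 U guv -> continuous2 U gvu -> partial_u U gv guv.
Proof.
  intros HU Hu Hv Huv Hvu C1 C2.
  apply (partial_u_ext U HU gv gv gvu guv); [reflexivity| |exact Hvu].
  intros u v H. symmetry. exact (partial_schwarz U g gu gv guv gvu u v HU Hu Hv Huv Hvu C1 C2 H).
Qed.

Lemma vsmooth_partial_u U x xu : open2 U -> vsmooth U x -> vpartial_u U x xu -> vsmooth U xu.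
Proof.
  intros HU (A0 & A1 & A2 & A3) (B0 & B1 & B2 & B3).
  repeat split; [exact (smooth2_partial_u _ _ _ HU A0 B0)|exact (smooth2_partial_u _ _ _ HU A1 B1)
    |exact (smooth2_partial_u _ _ _ HU A2 B2)|exact (smooth2_partial_u _ _ _ HU A3 B3)].
Qed.

Lemma vsmooth_partial_v U x xv : open2 U -> vsmooth U x -> vpartial_v U x xv -> vsmooth U xv.
Proof.
  intros HU (A0 & A1 & A2 & A3) (B0 & B1 & B2 & B3).
  repeat split; [exact (smooth2_partial_v _ _ _ HU A0 B0)|exact (smooth2_partial_v _ _ _ HU A1 B1)
    |exact (smooth2_partial_v _ _ _ HU A2 B2)|exact (smooth2_partial_v _ _ _ HU A3 B3)].
Qed.

Lemma vsmooth_ex_partial_u U x : open2 U -> vsmooth U x ->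
  exists xu, vpartial_u U x xu /\ vsmooth U xu.
Proof.
  intros HU Hs. pose proof Hs as (A0 & A1 & A2 & A3).
  destruct (smooth2_ex_partial_u _ _ A0) as [g0 G0], (smooth2_ex_partial_u _ _ A1) as [g1 G1],
    (smooth2_ex_partial_u _ _ A2) as [g2 G2], (smooth2_ex_partial_u _ _ A3) as [g3 G3].
  assert (P : vpartial_u U x (fun u v => mk4 (g0 u v) (g1 u v) (g2 u v) (g3 u v)))
    by (repeat split; assumption).
  eexists; split; [exact P|]. exact (vsmooth_partial_u U x _ HU Hs P).
Qed.

Lemma vsmooth_ex_partial_v U x : open2 U -> vsmooth U x ->
  exists xv, vpartial_v U x xv /\ vsmooth U xv.
Proof.
  intros HU Hs. pose proof Hs as (A0 & A1 & A2 & A3).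
  destruct (smooth2_ex_partial_v _ _ A0) as [g0 G0], (smooth2_ex_partial_v _ _ A1) as [g1 G1],
    (smooth2_ex_partial_v _ _ A2) as [g2 G2], (smooth2_ex_partial_v _ _ A3) as [g3 G3].
  assert (P : vpartial_v U x (fun u v => mk4 (g0 u v) (g1 u v) (g2 u v) (g3 u v)))
    by (repeat split; assumption).
  eexists; split; [exact P|]. exact (vsmooth_partial_v U x _ HU Hs P).
Qed.

Lemma vsmooth_flip U x : vsmooth U x -> vsmooth (flip U) (flip x).
Proof. intros (A0 & A1 & A2 & A3). repeat split; apply smooth2_flip; assumption. Qed.

Lemma vpartial_v_flip U x xv : vpartial_v U x xv -> vpartial_u (flip U) (flip x) (flip xv).
Proof. intros (A0 & A1 & A2 & A3). repeat split; apply partial_v_flip; assumption. Qed.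

Lemma vpartial_u_flip U x xu : vpartial_u U x xu -> vpartial_v (flip U) (flip x) (flip xu).
Proof. intros (A0 & A1 & A2 & A3). repeat split; apply partial_u_flip; assumption. Qed.

Lemma vchain U x xu xv cu cv t du dv : open2 U -> vsmooth U x ->
  vpartial_u U x xu -> vpartial_v U x xv -> U (cu t) (cv t) ->
  derivable_pt_lim cu t du -> derivable_pt_lim cv t dv ->
  vderiv (fun s => x (cu s) (cv s)) t (vlin du (xu (cu t) (cv t)) dv (xv (cu t) (cv t))).
Proof.
  intros HU Hs Hu Hv H Du Dv.
  destruct (vsmooth_partial_u U x xu HU Hs Hu) as (C0 & C1 & C2 & C3).
  destruct Hu as (A0 & A1 & A2 & A3), Hv as (B0 & B1 & B2 & B3).
  unfold vlin, vadd, vscal; repeat split; simpl; rewrite (Rmult_comm du), (Rmult_comm dv);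
    [exact (partial_chain U _ _ _ cu cv t du dv HU A0 B0 (C0 0%nat) H Du Dv)
    |exact (partial_chain U _ _ _ cu cv t du dv HU A1 B1 (C1 0%nat) H Du Dv)
    |exact (partial_chain U _ _ _ cu cv t du dv HU A2 B2 (C2 0%nat) H Du Dv)
    |exact (partial_chain U _ _ _ cu cv t du dv HU A3 B3 (C3 0%nat) H Du Dv)].
Qed.

Lemma vclairaut U g gu gv guv : open2 U -> vsmooth U g ->
  vpartial_u U g gu -> vpartial_v U g gv -> vpartial_v U gu guv -> vpartial_u U gv guv.
Proof.
  intros HU Hs Hu Hv Huv.
  pose proof (vsmooth_partial_v U gu guv HU (vsmooth_partial_u U g gu HU Hs Hu) Huv)
    as (C0 & C1 & C2 & C3).
  destruct (vsmooth_ex_partial_u U gv HU (vsmooth_partial_v U g gv HU Hs Hv))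
    as [gvu [Hvu (D0 & D1 & D2 & D3)]].
  destruct Hu as (A0 & A1 & A2 & A3), Hv as (B0 & B1 & B2 & B3),
    Huv as (E0 & E1 & E2 & E3), Hvu as (F0 & F1 & F2 & F3).
  repeat split;
    [exact (partial_clairaut U _ _ _ _ _ HU A0 B0 E0 F0 (C0 0%nat) (D0 0%nat))
    |exact (partial_clairaut U _ _ _ _ _ HU A1 B1 E1 F1 (C1 0%nat) (D1 0%nat))
    |exact (partial_clairaut U _ _ _ _ _ HU A2 B2 E2 F2 (C2 0%nat) (D2 0%nat))
    |exact (partial_clairaut U _ _ _ _ _ HU A3 B3 E3 F3 (C3 0%nat) (D3 0%nat))].
Qed.

Lemma vpartial_u_mdot U x y xu yu : vpartial_u U x xu -> vpartial_u U y yu ->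
  partial_u U (fun u v => mdot (x u v) (y u v))
    (fun u v => mdot (xu u v) (y u v) + mdot (x u v) (yu u v)).
Proof.
  intros (A0 & A1 & A2 & A3) (B0 & B1 & B2 & B3) u v H.
  apply (vderiv_mdot (fun s => x s v) (fun s => y s v)); repeat split; auto.
Qed.

Lemma mdot_const_partial_u U x y xu yu c : open2 U ->
  vpartial_u U x xu -> vpartial_u U y yu -> (forall u v, U u v -> mdot (x u v) (y u v) = c) ->
  forall u v, U u v -> mdot (xu u v) (y u v) + mdot (x u v) (yu u v) = 0.
Proof.
  intros HU Hx Hy Hc. exact (partial_u_const U HU _ _ c Hc (vpartial_u_mdot U x y xu yu Hx Hy)).
Qed.

Lemma mdot_const_partial_v U x y xv yv c : open2 U ->
  vpartial_v U x xv -> vpartial_v U y yv -> (forall u v, U u v -> mdot (x u v) (y u v) = c) ->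
  forall u v, U u v -> mdot (xv u v) (y u v) + mdot (x u v) (yv u v) = 0.
Proof.
  intros HU Hx Hy Hc u v.
  exact (mdot_const_partial_u (flip U) (flip x) (flip y) (flip xv) (flip yv) c (open2_flip U HU)
    (vpartial_v_flip U x xv Hx) (vpartial_v_flip U y yv Hy) (fun u v => Hc v u) v u).
Qed.

Lemma vpartial_u_wedge U x y xu yu a b : vpartial_u U x xu -> vpartial_u U y yu ->
  partial_u U (fun u v => wedge (x u v) (y u v) a b)
    (fun u v => wedge (xu u v) (y u v) a b + wedge (x u v) (yu u v) a b).
Proof.
  intros Hx Hy u v H.
  assert (Hc : forall z zu c, vpartial_u U z zu ->
    derivable_pt_lim (fun s => mdot (z s v) c) u (mdot (zu u v) c)).
  { intros z zu c (A0 & A1 & A2 & A3).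
    refine (derivable_pt_lim_congr _ _ _ _ _ (fun s => eq_refl) _
      (vderiv_mdot (fun s => z s v) (fun _ => c) u (zu u v) vzero _ (vderiv_const c u)));
      [rewrite mdot_vzero_r; ring|repeat split; auto]. }
  refine (derivable_pt_lim_congr _ _ _ _ _ _ _ (derivable_pt_lim_minus _ _ _ _ _
    (derivable_pt_lim_mult _ _ _ _ _ (Hc x xu a Hx) (Hc y yu b Hy))
    (derivable_pt_lim_mult _ _ _ _ _ (Hc x xu b Hx) (Hc y yu a Hy))));
    [intro s; reflexivity|unfold wedge; ring].
Qed.

(** * A moving frame along the curve *)

Definition ortho_frame (P T N V : v4) : Prop :=
  mdot P P = -1 /\ mdot P T = 0 /\ mdot T T = 1 /\
  mdot P N = 0 /\ mdot T N = 0 /\ mdot N N = 1 /\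
  mdot P V = 0 /\ mdot T V = 0 /\ mdot N V = 0 /\ 0 < mdot V V.

Section FrameODE.

Variable D : R -> Prop.
Hypothesis HD : open_set D.
Variables P T N V W : R -> v4.
Hypothesis Hframe : forall t, D t -> ortho_frame (P t) (T t) (N t) (V t).
Hypothesis HP : forall t, D t -> vderiv P t (T t).
Hypothesis HT : forall t, D t -> exists Q, vderiv T t Q.
Hypothesis HN : forall t, D t -> vderiv N t vzero.
Hypothesis HVW : forall t, D t -> exists al be,
  vderiv V t (vscal al (V t)) /\ vderiv W t (vlin be (V t) (2 * al) (W t)).

(* [T' - P] is orthogonal to the whole frame: differentiate the constant
   products [<P,T>], [<T,T>], [<T,N>] and [<T,V>]. *)
Lemma frame_accel t : D t -> vderiv T t (P t).
Proof.
  intros Ht. destruct (HT t Ht) as [Q dT], (HVW t Ht) as (al & be & dV & _).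
  pose proof (HP t Ht) as dP; pose proof (HN t Ht) as dN.
  assert (Hconst : forall (X Y : R -> v4) DX DY c, vderiv X t DX -> vderiv Y t DY ->
      (forall s, D s -> mdot (X s) (Y s) = c) -> mdot DX (Y t) + mdot (X t) DY = 0).
  { intros X Y DX DY c HX HY Hc.
    exact (uniqueness_limite _ _ _ _ (vderiv_mdot X Y t DX DY HX HY)
      (derivable_pt_lim_open_const D _ c t HD Ht Hc)). }
  assert (E1 : mdot (T t) (T t) + mdot (P t) Q = 0)
    by (apply (Hconst P T _ _ 0 dP dT); intros s Hs; apply Hframe in Hs; red in Hs; tauto).
  assert (E2 : mdot Q (T t) + mdot (T t) Q = 0)
    by (apply (Hconst T T _ _ 1 dT dT); intros s Hs; apply Hframe in Hs; red in Hs; tauto).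
  assert (E3 : mdot Q (N t) + mdot (T t) vzero = 0)
    by (apply (Hconst T N _ _ 0 dT dN); intros s Hs; apply Hframe in Hs; red in Hs; tauto).
  assert (E4 : mdot Q (V t) + mdot (T t) (vscal al (V t)) = 0)
    by (apply (Hconst T V _ _ 0 dT dV); intros s Hs; apply Hframe in Hs; red in Hs; tauto).
  destruct (Hframe t Ht) as (PP & PT & TT & PN & TN & NN & PV & TV & NV & VV).
  rewrite mdot_vzero_r in E3. rewrite mdot_vscal_r, TV in E4.
  rewrite (mdot_sym Q) in E2, E3, E4.
  assert (Z : vlin 1 Q (-1) (P t) = vzero).
  { apply (orth_frame_eq0 (P t) (T t) (N t) (V t)); try assumption;
      rewrite ?mdot_vlin_r, ?(mdot_sym (T t) (P t)), ?(mdot_sym (N t) (P t)),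
        ?(mdot_sym (V t) (P t)); try lra.
    rewrite PP, TT, NN, NV. nra. }
  rewrite <- (vlin_sub_eq0 _ _ Z). exact dT.
Qed.

Lemma frame_ratio_deriv t : D t ->
  derivable_pt_lim (fun s => mdot (P s) (W s) / mdot (V s) (V s)) t
    (mdot (T t) (W t) / mdot (V t) (V t)) /\
  derivable_pt_lim (fun s => mdot (T s) (W s) / mdot (V s) (V s)) t
    (mdot (P t) (W t) / mdot (V t) (V t)).
Proof.
  intros Ht. destruct (HVW t Ht) as (al & be & dV & dW).
  destruct (Hframe t Ht) as (_ & _ & _ & _ & _ & _ & PV & TV & _ & VV).
  pose proof (vderiv_mdot V V t _ _ dV dV) as dVV.
  assert (Vne : mdot (V t) (V t) <> 0) by lra.
  split.
  - refine (derivable_pt_lim_congr _ _ _ _ _ (fun s => eq_refl) _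
      (derivable_pt_lim_div _ _ _ _ _ (vderiv_mdot P W t _ _ (HP t Ht) dW) dVV Vne)).
    unfold Rsqr. rewrite mdot_vlin_r, mdot_vscal_l, mdot_vscal_r, PV. field. exact Vne.
  - refine (derivable_pt_lim_congr _ _ _ _ _ (fun s => eq_refl) _
      (derivable_pt_lim_div _ _ _ _ _ (vderiv_mdot T W t _ _ (frame_accel t Ht) dW) dVV Vne)).
    unfold Rsqr. rewrite mdot_vlin_r, mdot_vscal_l, mdot_vscal_r, TV. field. exact Vne.
Qed.

End FrameODE.

(** * The flat chart and the asymptotic curve *)

Section FlatChart.

Variable U : R -> R -> Prop.
Variables f n fu fv fuu fuv fvv : R -> R -> v4.
Hypothesis HU : open2 U.
Hypothesis Hf : forall u v, U u v -> in_H3 (f u v).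
Hypothesis Hsf : vsmooth U f.
Hypothesis Pfu : vpartial_u U f fu.
Hypothesis Pfv : vpartial_v U f fv.
Hypothesis Pfuu : vpartial_u U fu fuu.
Hypothesis Pfuv : vpartial_v U fu fuv.
Hypothesis Pfvu : vpartial_u U fv fuv.
Hypothesis Pfvv : vpartial_v U fv fvv.
Hypothesis Hli : forall u v, U u v -> lin_indep (fu u v) (fv u v).
Hypothesis Hsn : vsmooth U n.
Hypothesis Hun : forall u v, U u v -> unit_normal (f u v) (fu u v) (fv u v) (n u v).
Hypothesis Hfl : forall u v, U u v ->
  Kext (fu u v) (fv u v) (fuu u v) (fuv u v) (fvv u v) (n u v) = 0.

Let L u v := LL (fuu u v) (n u v).
Let M u v := MM (fuv u v) (n u v).
Let N u v := NN (fvv u v) (n u v).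

Lemma normal_unit u v : U u v -> mdot (n u v) (n u v) = 1.
Proof. intros Huv. apply (Hun u v Huv). Qed.

Lemma normal_orth_f u v : U u v -> mdot (n u v) (f u v) = 0.
Proof. intros Huv. apply (Hun u v Huv). Qed.

Lemma normal_orth_fu u v : U u v -> mdot (n u v) (fu u v) = 0.
Proof. intros Huv. apply (Hun u v Huv). Qed.

Lemma normal_orth_fv u v : U u v -> mdot (n u v) (fv u v) = 0.
Proof. intros Huv. apply (Hun u v Huv). Qed.

Lemma chart_frame u v : U u v -> surface_frame (f u v) (fu u v) (fv u v) (n u v).
Proof.
  intros Huv. destruct (Hf u v Huv) as [Hff Hpos], (Hun u v Huv) as (Hnn & Hnf & Hnu & Hnv).
  assert (Hf1 : forall u v, U u v -> mdot (f u v) (f u v) = -1) by apply Hf.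
  pose proof (mdot_const_partial_u U f f fu fu (-1) HU Pfu Pfu Hf1 u v Huv).
  pose proof (mdot_const_partial_v U f f fv fv (-1) HU Pfv Pfv Hf1 u v Huv).
  rewrite (mdot_sym (f u v)) in *.
  refine (conj Hff (conj Hpos (conj _ (conj _ (conj (Hli u v Huv) (conj Hnn (conj Hnf
    (conj Hnu Hnv)))))))); lra.
Qed.

Lemma chart_flat u v : U u v -> L u v * N u v = M u v ^ 2.
Proof.
  intros Huv. destruct (chart_frame u v Huv) as (Hff & Hpos & Hu & Hv & Hl & _).
  pose proof (first_form_det_pos _ _ _ Hff Hpos Hu Hv Hl) as HD.
  specialize (Hfl u v Huv). unfold Kext in Hfl. unfold L, M, N.
  apply Rmult_integral in Hfl as [Z|Z]; [lra|].
  exfalso. revert Z. apply Rinv_neq_0_compat. lra.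
Qed.

Lemma flat_nonumbilic_principal u v : U u v ->
  ~ umbilic (fu u v) (fv u v) (fuu u v) (fuv u v) (fvv u v) (n u v) ->
  L u v <> 0 \/ N u v <> 0.
Proof.
  intros Huv Hnu. pose proof (chart_flat u v Huv) as Hflat.
  destruct (Req_dec (L u v) 0) as [HL|HL]; [|left; exact HL].
  destruct (Req_dec (N u v) 0) as [HN|HN]; [|right; exact HN].
  exfalso. apply Hnu. exists 0.
  assert (HM : M u v = 0) by (rewrite HL, HN in Hflat; nra).
  unfold L, M, N in *. rewrite HL, HM, HN. repeat split; ring.
Qed.

Variables (a b : R) (cu cv cu' cv' : R -> R).
Hypothesis Scu : smooth1 a b cu.
Hypothesis Scv : smooth1 a b cv.
Hypothesis Dcu : forall t, a < t < b -> derivable_pt_lim cu t (cu' t).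
Hypothesis Dcv : forall t, a < t < b -> derivable_pt_lim cv t (cv' t).
Hypothesis Hc : forall t, a < t < b -> U (cu t) (cv t).
Hypothesis Hasy : forall t, a < t < b ->
  IIq (fuu (cu t) (cv t)) (fuv (cu t) (cv t)) (fvv (cu t) (cv t)) (n (cu t) (cv t))
    (cu' t) (cv' t) = 0.
Hypothesis Harc : forall t, a < t < b ->
  Iq (fu (cu t) (cv t)) (fv (cu t) (cv t)) (cu' t) (cv' t) = 1.

Let P t := f (cu t) (cv t).
Let T t := vlin (cu' t) (fu (cu t) (cv t)) (cv' t) (fv (cu t) (cv t)).
Let Nc t := n (cu t) (cv t).
Let H t := Hmean (fu (cu t) (cv t)) (fv (cu t) (cv t)) (fuu (cu t) (cv t))
  (fuv (cu t) (cv t)) (fvv (cu t) (cv t)) (n (cu t) (cv t)).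

Lemma curve_position_deriv t : a < t < b -> vderiv P t (T t).
Proof.
  intros Ht. exact (vchain U f fu fv cu cv t _ _ HU Hsf Pfu Pfv (Hc t Ht) (Dcu t Ht) (Dcv t Ht)).
Qed.

Lemma curve_tangent_deriv t : a < t < b -> exists Q, vderiv T t Q.
Proof.
  intros Ht. pose proof (vsmooth_partial_u U f fu HU Hsf Pfu) as Sfu.
  pose proof (vsmooth_partial_v U f fv HU Hsf Pfv) as Sfv.
  destruct (smooth1_second_deriv a b cu cu' Scu Dcu t Ht) as [l1 L1].
  destruct (smooth1_second_deriv a b cv cv' Scv Dcv t Ht) as [l2 L2].
  eexists. apply (vderiv_vlin cu' cv' (fun s => fu (cu s) (cv s)) (fun s => fv (cu s) (cv s))
    t l1 l2); [exact L1|exact L2|apply (vchain U fu fuu fuv)|apply (vchain U fv fuv fvv)]; auto.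
Qed.

Section NormalDerivatives.

Variables nu nv nuu nuv nuuu nuuv : R -> R -> v4.
Hypothesis Pnu : vpartial_u U n nu.
Hypothesis Pnv : vpartial_v U n nv.
Hypothesis Pnuu : vpartial_u U nu nuu.
Hypothesis Pnuv : vpartial_v U nu nuv.
Hypothesis Pnvu : vpartial_u U nv nuv.
Hypothesis Pnuuu : vpartial_u U nuu nuuu.
Hypothesis Pnuuv : vpartial_v U nuu nuuv.
Hypothesis Pnuvu : vpartial_u U nuv nuuv.

Let V t := nu (cu t) (cv t).
Let W t := nuu (cu t) (cv t).

Lemma chart_weingarten u v : U u v -> weingarten_data (f u v) (fu u v) (fv u v) (n u v)
  (nu u v) (nv u v) (L u v) (M u v) (N u v).
Proof.
  intros Huv.
  pose proof (mdot_const_partial_u U n f nu fu 0 HU Pnu Pfu normal_orth_f u v Huv).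
  pose proof (mdot_const_partial_u U n n nu nu 1 HU Pnu Pnu normal_unit u v Huv).
  pose proof (mdot_const_partial_u U n fu nu fuu 0 HU Pnu Pfuu normal_orth_fu u v Huv).
  pose proof (mdot_const_partial_u U n fv nu fuv 0 HU Pnu Pfvu normal_orth_fv u v Huv).
  pose proof (mdot_const_partial_v U n f nv fv 0 HU Pnv Pfv normal_orth_f u v Huv).
  pose proof (mdot_const_partial_v U n n nv nv 1 HU Pnv Pnv normal_unit u v Huv).
  pose proof (mdot_const_partial_v U n fu nv fuv 0 HU Pnv Pfuv normal_orth_fu u v Huv).
  pose proof (mdot_const_partial_v U n fv nv fvv 0 HU Pnv Pfvv normal_orth_fv u v Huv).
  pose proof (normal_orth_f u v Huv); pose proof (normal_orth_fu u v Huv);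
    pose proof (normal_orth_fv u v Huv).
  unfold weingarten_data, L, M, N, LL, MM, NN.
  rewrite !(mdot_sym (n u v)) in *.
  repeat split; lra.
Qed.

Lemma chart_normal_wedge u v : U u v -> wedge_zero (nu u v) (nv u v).
Proof.
  intros Huv. exact (flat_normal_wedge _ _ _ _ _ _ _ _ _ (chart_frame u v Huv)
    (chart_weingarten u v Huv) (chart_flat u v Huv)).
Qed.

Lemma curve_dn_tangent t : a < t < b ->
  vlin (cu' t) (nu (cu t) (cv t)) (cv' t) (nv (cu t) (cv t)) = vzero.
Proof.
  intros Ht. pose proof (Hc t Ht) as Huv.
  exact (asymptotic_dn _ _ _ _ _ _ _ _ _ (chart_frame _ _ Huv) (chart_weingarten _ _ Huv)
    (chart_flat _ _ Huv) _ _ (Hasy t Ht)).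
Qed.

Lemma curve_normal_deriv t : a < t < b -> vderiv Nc t vzero.
Proof.
  intros Ht. rewrite <- (curve_dn_tangent t Ht).
  exact (vchain U n nu nv cu cv t _ _ HU Hsn Pnu Pnv (Hc t Ht) (Dcu t Ht) (Dcv t Ht)).
Qed.

(* Since [nv = mu nu], differentiating [nu /\ nv = 0] in [u] once and twice
   expresses [nuv] and [nuuv] through [nu], [nuu], [nuuu]; the asymptotic
   direction [(cu', cv')] then satisfies [cu' + mu cv' = 0]. *)
Lemma curve_shape_derivs t : a < t < b -> 0 < mdot (V t) (V t) ->
  exists al be, vderiv V t (vscal al (V t)) /\ vderiv W t (vlin be (V t) (2 * al) (W t)).
Proof.
  intros Ht Hpos. pose proof (Hc t Ht) as Hct.
  assert (W1 : forall u v, U u v -> forall a b,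
    wedge (nuu u v) (nv u v) a b + wedge (nu u v) (nuv u v) a b = 0).
  { intros u v Huv a' b'. exact (partial_u_const U HU _ _ 0
      (fun u v Huv => chart_normal_wedge u v Huv a' b')
      (vpartial_u_wedge U nu nv nuu nuv a' b' Pnuu Pnvu) u v Huv). }
  assert (W2 : forall u v, U u v -> forall a b, wedge (nuuu u v) (nv u v) a b
    + 2 * wedge (nuu u v) (nuv u v) a b + wedge (nu u v) (nuuv u v) a b = 0).
  { intros u v Huv a' b'.
    pose proof (partial_u_const U HU _ _ 0 (fun u v Huv => W1 u v Huv a' b')
      (fun u v Huv => derivable_pt_lim_plus _ _ _ _ _
        (vpartial_u_wedge U nuu nv nuuu nuv a' b' Pnuuu Pnvu u v Huv)
        (vpartial_u_wedge U nu nuv nuu nuuv a' b' Pnuu Pnuvu u v Huv)) u v Huv).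
    lra. }
  set (x := nu (cu t) (cv t)) in *; set (y := nv (cu t) (cv t)) in *.
  assert (Wxy := chart_normal_wedge _ _ Hct). fold x y in Wxy.
  assert (Hx : mdot x x <> 0) by (change (0 < mdot x x) in Hpos; lra).
  destruct (wedge_zero_diff1 x y _ _ Wxy Hx (W1 _ _ Hct)) as [lam Hlam].
  destruct (wedge_zero_diff2 x y _ _ _ _ lam Wxy Hx Hlam (W2 _ _ Hct)) as [kap Hkap].
  set (mu := mdot y x / mdot x x) in *.
  assert (Hdu : cu' t = - cv' t * mu).
  { pose proof (f_equal (fun z => mdot z x) (curve_dn_tangent t Ht)) as E.
    cbv beta in E. fold x y in E.
    rewrite (wedge_zero_vscal x y Wxy Hx) in E. fold mu in E.
    rewrite mdot_vlin_l, mdot_vscal_l, (mdot_sym vzero), mdot_vzero_r in E.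
    apply (Rmult_eq_reg_r (mdot x x)); [lra|exact Hx]. }
  pose proof (vsmooth_partial_u U n nu HU Hsn Pnu) as Snu.
  pose proof (vsmooth_partial_u U nu nuu HU Snu Pnuu) as Snuu.
  exists (cv' t * lam), (cv' t * kap). split.
  - refine (eq_ind _ (vderiv V t) (vchain U nu nuu nuv cu cv t _ _ HU Snu Pnuu Pnuv Hct
      (Dcu t Ht) (Dcv t Ht)) _ _).
    change (V t) with x. rewrite Hlam, Hdu. apply v4_eq; unfold vlin, vadd, vscal; simpl; ring.
  - refine (eq_ind _ (vderiv W t) (vchain U nuu nuuu nuuv cu cv t _ _ HU Snuu Pnuuu Pnuuv Hct
      (Dcu t Ht) (Dcv t Ht)) _ _).
    change (V t) with x; change (W t) with (nuu (cu t) (cv t)). rewrite Hkap, Hdu.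
    apply v4_eq; unfold vlin, vadd, vscal; simpl; ring.
Qed.

Lemma curve_frame t : a < t < b -> 0 < mdot (V t) (V t) ->
  ortho_frame (P t) (T t) (Nc t) (V t).
Proof.
  intros Ht Hpos. pose proof (Hc t Ht) as Huv.
  pose proof (chart_frame _ _ Huv) as Hfr.
  pose proof (chart_weingarten _ _ Huv) as Hw.
  pose proof (asymptotic_tangent_nu _ _ _ _ _ _ _ _ _ Hw (chart_flat _ _ Huv) _ _ (Hasy t Ht))
    as HTV.
  destruct Hfr as (Hff & _ & Hfu & Hfv & _ & Hnn & Hnf & Hnfu & Hnfv), Hw as (Hvf & Hvn & _).
  unfold ortho_frame, P, T, Nc, V; cbv beta.
  rewrite mdot_tangent_Iq, (Harc t Ht), !mdot_vlin_r, !mdot_vlin_l.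
  rewrite !(mdot_sym (f _ _) (fu _ _)), !(mdot_sym (f _ _) (fv _ _)), (mdot_sym (f _ _) (n _ _)),
    (mdot_sym (f _ _) (nu _ _)), (mdot_sym (fu _ _) (n _ _)), (mdot_sym (fv _ _) (n _ _)),
    (mdot_sym (n _ _) (nu _ _)).
  rewrite mdot_vlin_l in HTV.
  repeat split; try assumption; rewrite ?Hfu, ?Hfv, ?Hnfu, ?Hnfv; ring.
Qed.

Lemma curve_inv_mean t : a < t < b -> 0 < mdot (V t) (V t) ->
  H t <> 0 /\ / H t = 2 * (mdot (P t) (W t) / mdot (V t) (V t)).
Proof.
  intros Ht Hpos. pose proof (Hc t Ht) as Huv.
  pose proof (chart_frame _ _ Huv) as Hfr.
  pose proof (chart_weingarten _ _ Huv) as Hw.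
  pose proof (chart_flat _ _ Huv) as Hflat.
  assert (HL : L (cu t) (cv t) <> 0)
    by exact (proj2 (flat_nu_pos _ _ _ _ _ _ _ _ _ Hfr Hw Hflat) Hpos).
  pose proof (flat_mdot_nu _ _ _ _ _ _ _ _ _ Hfr Hw Hflat) as HV.
  change (mdot (V t) (V t) = 2 * H t * L (cu t) (cv t)) in HV.
  assert (HPW : mdot (P t) (W t) = L (cu t) (cv t)).
  { pose proof (mdot_const_partial_u U nu f nuu fu 0 HU Pnuu Pfu
      (fun u v Huv => proj1 (chart_weingarten u v Huv)) _ _ Huv) as E.
    destruct Hw as (_ & _ & Hnu & _). unfold P, W. rewrite mdot_sym. lra. }
  assert (HH : H t <> 0) by (intro Z; rewrite Z in HV; lra).
  split; [exact HH|]. rewrite HPW, HV. field. split; assumption.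
Qed.

Lemma inv_mean_second_deriv_near t0 : a < t0 < b -> L (cu t0) (cv t0) <> 0 ->
  H t0 <> 0 /\ second_deriv_self_near (fun s => / H s) t0.
Proof.
  intros Ht0 HL0.
  set (D := fun t => a < t < b /\ 0 < mdot (V t) (V t)).
  assert (dV : forall t, a < t < b -> vderiv V t (vlin (cu' t) (nuu (cu t) (cv t))
                                                  (cv' t) (nuv (cu t) (cv t)))).
  { intros t Ht. exact (vchain U nu nuu nuv cu cv t _ _ HU (vsmooth_partial_u U n nu HU Hsn Pnu)
      Pnuu Pnuv (Hc t Ht) (Dcu t Ht) (Dcv t Ht)). }
  assert (HD : open_set D) by exact (open_set_pos _ _ _ (open_set_interval a b)
    (fun t Ht => vderiv_mdot V V t _ _ (dV t Ht) (dV t Ht))).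
  assert (Dt0 : D t0).
  { pose proof (Hc t0 Ht0) as Huv. split; [exact Ht0|].
    exact (proj1 (flat_nu_pos _ _ _ _ _ _ _ _ _ (chart_frame _ _ Huv) (chart_weingarten _ _ Huv)
      (chart_flat _ _ Huv)) HL0). }
  pose proof (frame_ratio_deriv D HD P T Nc V W (fun t Dt => curve_frame t (proj1 Dt) (proj2 Dt))
    (fun t Dt => curve_position_deriv t (proj1 Dt)) (fun t Dt => curve_tangent_deriv t (proj1 Dt))
    (fun t Dt => curve_normal_deriv t (proj1 Dt))
    (fun t Dt => curve_shape_derivs t (proj1 Dt) (proj2 Dt))) as Hratio.
  split; [exact (proj1 (curve_inv_mean t0 (proj1 Dt0) (proj2 Dt0)))|].
  exists D, (fun t => 2 * (mdot (T t) (W t) / mdot (V t) (V t))).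
  split; [exact HD|split; [exact Dt0|]]. intros t Dt. destruct (Hratio t Dt) as [R1 R2].
  split.
  - apply (derivable_pt_lim_open_ext D (fun s => 2 * (mdot (P s) (W s) / mdot (V s) (V s))) _ t _
      HD Dt); [|exact (derivable_pt_lim_scal _ 2 _ _ R1)].
    intros s Ds. symmetry. exact (proj2 (curve_inv_mean s (proj1 Ds) (proj2 Ds))).
  - rewrite (proj2 (curve_inv_mean t (proj1 Dt) (proj2 Dt))).
    exact (derivable_pt_lim_scal _ 2 _ _ R2).
Qed.

End NormalDerivatives.

Lemma curve_inv_mean_local t0 : a < t0 < b -> L (cu t0) (cv t0) <> 0 ->
  H t0 <> 0 /\ second_deriv_self_near (fun s => / H s) t0.
Proof.
  destruct (vsmooth_ex_partial_u U n HU Hsn) as [nu [Pnu Snu]].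
  destruct (vsmooth_ex_partial_v U n HU Hsn) as [nv [Pnv _]].
  destruct (vsmooth_ex_partial_u U nu HU Snu) as [nuu [Pnuu Snuu]].
  destruct (vsmooth_ex_partial_v U nu HU Snu) as [nuv [Pnuv _]].
  destruct (vsmooth_ex_partial_u U nuu HU Snuu) as [nuuu [Pnuuu _]].
  destruct (vsmooth_ex_partial_v U nuu HU Snuu) as [nuuv [Pnuuv _]].
  apply (inv_mean_second_deriv_near nu nv nuu nuv nuuu nuuv); try assumption.
  - exact (vclairaut U n nu nv nuv HU Hsn Pnu Pnv Pnuv).
  - exact (vclairaut U nu nuu nuv nuuv HU Snu Pnuu Pnuv Pnuuv).
Qed.

End FlatChart.

(** * Exchanging the coordinates *)

Lemma lin_indep_sym p q : lin_indep p q -> lin_indep q p.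
Proof.
  intros Hli a c E. destruct (Hli c a) as [H1 H2]; [|split; assumption].
  rewrite <- E. apply v4_eq; unfold vadd, vscal; simpl; ring.
Qed.

Lemma unit_normal_swap x fu fv n : unit_normal x fu fv n -> unit_normal x fv fu n.
Proof. intros (H1 & H2 & H3 & H4). repeat split; assumption. Qed.

Lemma Kext_swap fu fv fuu fuv fvv n :
  Kext fv fu fvv fuv fuu n = Kext fu fv fuu fuv fvv n.
Proof.
  unfold Kext, LL, MM, NN, EE, FF, GG. rewrite (mdot_sym fv fu).
  f_equal; [ring|f_equal; ring].
Qed.

Lemma Hmean_swap fu fv fuu fuv fvv n :
  Hmean fv fu fvv fuv fuu n = Hmean fu fv fuu fuv fvv n.
Proof.
  unfold Hmean, LL, MM, NN, EE, FF, GG. rewrite (mdot_sym fv fu).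
  f_equal; [ring|f_equal; ring].
Qed.

Lemma IIq_swap fuu fuv fvv n du dv : IIq fvv fuv fuu n dv du = IIq fuu fuv fvv n du dv.
Proof. unfold IIq, LL, MM, NN. ring. Qed.

Lemma Iq_swap fu fv du dv : Iq fv fu dv du = Iq fu fv du dv.
Proof. unfold Iq, EE, FF, GG. rewrite (mdot_sym fv fu). ring. Qed.

Lemma second_deriv_self_near_ext h1 h2 t0 : (forall s, h1 s = h2 s) ->
  second_deriv_self_near h1 t0 -> second_deriv_self_near h2 t0.
Proof.
  intros E (D & g & HD & Dt0 & Hg). exists D, g. split; [exact HD|split; [exact Dt0|]].
  intros t Dt. destruct (Hg t Dt) as [H1 H2]. rewrite <- E.
  split; [exact (derivable_pt_lim_ext _ _ _ _ E H1)|exact H2].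
Qed.

Theorem lemma3p2
  (U : R -> R -> Prop) (f n fu fv fuu fuv fvv : R -> R -> v4)
  (a b : R) (cu cv cu' cv' : R -> R) :
  open2 U ->
  (forall u v, U u v -> in_H3 (f u v)) ->
  vsmooth U f ->
  vpartial_u U f fu -> vpartial_v U f fv ->
  vpartial_u U fu fuu -> vpartial_v U fu fuv -> vpartial_v U fv fvv ->
  (forall u v, U u v -> lin_indep (fu u v) (fv u v)) ->
  vsmooth U n ->
  (forall u v, U u v -> unit_normal (f u v) (fu u v) (fv u v) (n u v)) ->
  (forall u v, U u v ->
     Kext (fu u v) (fv u v) (fuu u v) (fuv u v) (fvv u v) (n u v) = 0) ->
  (* gamma (t) = f (cu t, cv t) for t in (a, b) *)
  a < b ->
  smooth1 a b cu -> smooth1 a b cv ->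
  (forall t, a < t < b -> derivable_pt_lim cu t (cu' t)) ->
  (forall t, a < t < b -> derivable_pt_lim cv t (cv' t)) ->
  (forall t, a < t < b -> U (cu t) (cv t)) ->
  (forall t, a < t < b ->
     ~ umbilic (fu (cu t) (cv t)) (fv (cu t) (cv t)) (fuu (cu t) (cv t))
               (fuv (cu t) (cv t)) (fvv (cu t) (cv t)) (n (cu t) (cv t))) ->
  (forall t, a < t < b ->
     IIq (fuu (cu t) (cv t)) (fuv (cu t) (cv t)) (fvv (cu t) (cv t))
         (n (cu t) (cv t)) (cu' t) (cv' t) = 0) ->
  (forall t, a < t < b ->
     Iq (fu (cu t) (cv t)) (fv (cu t) (cv t)) (cu' t) (cv' t) = 1) ->
  let H := fun t => Hmean (fu (cu t) (cv t)) (fv (cu t) (cv t))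
                     (fuu (cu t) (cv t)) (fuv (cu t) (cv t))
                     (fvv (cu t) (cv t)) (n (cu t) (cv t)) in
  (forall t, a < t < b -> H t <> 0) /\
  exists h' : R -> R,
    forall t, a < t < b ->
      derivable_pt_lim (fun s => / H s) t (h' t) /\
      derivable_pt_lim h' t (/ H t).
Proof.
  intros HU Hf Hsf Pfu Pfv Pfuu Pfuv Pfvv Hli Hsn Hun Hfl _ Scu Scv Dcu Dcv Hc Hnu Hasy Harc H.
  pose proof (vclairaut U f fu fv fuv HU Hsf Pfu Pfv Pfuv) as Pfvu.
  assert (Hloc : forall t, a < t < b -> H t <> 0 /\ second_deriv_self_near (fun s => / H s) t).
  { intros t Ht.
    destruct (flat_nonumbilic_principal U f n fu fv fuu fuv fvv HU Hf Pfu Pfv Hli Hun Hfl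
      _ _ (Hc t Ht) (Hnu t Ht)) as [HL|HN].
    - exact (curve_inv_mean_local U f n fu fv fuu fuv fvv HU Hf Hsf Pfu Pfv Pfuu Pfuv Pfvu Pfvv
        Hli Hsn Hun Hfl a b cu cv cu' cv' Scu Scv Dcu Dcv Hc Hasy Harc t Ht HL).
    - (* exchange the coordinates, which exchanges the roles of [L] and [N] *)
      destruct (curve_inv_mean_local (flip U) (flip f) (flip n) (flip fv) (flip fu) (flip fvv)
        (flip fuv) (flip fuu) (open2_flip U HU) (fun u v => Hf v u) (vsmooth_flip U f Hsf)
        (vpartial_v_flip U f fv Pfv) (vpartial_u_flip U f fu Pfu)
        (vpartial_v_flip U fv fvv Pfvv) (vpartial_u_flip U fv fuv Pfvu)
        (vpartial_v_flip U fu fuv Pfuv) (vpartial_u_flip U fu fuu Pfuu)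
        (fun u v Huv => lin_indep_sym _ _ (Hli v u Huv)) (vsmooth_flip U n Hsn)
        (fun u v Huv => unit_normal_swap _ _ _ _ (Hun v u Huv))
        (fun u v Huv => eq_trans (Kext_swap _ _ _ _ _ _) (Hfl v u Huv))
        a b cv cu cv' cu' Scv Scu Dcv Dcu Hc
        (fun t Ht => eq_trans (IIq_swap _ _ _ _ _ _) (Hasy t Ht))
        (fun t Ht => eq_trans (Iq_swap _ _ _ _) (Harc t Ht)) t Ht HN) as [HH Hsd].
      unfold flip in HH, Hsd; cbv beta in HH, Hsd. rewrite Hmean_swap in HH.
      split; [exact HH|].
      refine (second_deriv_self_near_ext _ _ t _ Hsd). intros s. rewrite Hmean_swap. reflexivity. }
  split; [intros t Ht; exact (proj1 (Hloc t Ht))|].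
  apply second_deriv_self_glue. intros t Ht. exact (proj2 (Hloc t Ht)).
Qed.
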